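(* Let $V$ be an inhomogeneous $Y$-random evolution, $s\in J$ and $\omega \in \Omega$. Then $V(\cdot,\cdot)(\omega)$ is an inhomogeneous $Y$-semigroup. Further, if $V$ is regular, then $u \mapsto V(s,u)(\omega)$ is $Y$-strongly RCLL on $J(s)$, i.e. for every $f \in Y$, $u \mapsto V(s,u)(\omega)f$ belongs to $D(J(s),(Y,\|\cdot\|))$; more precisely, for $f \in Y$, \[ V(s,u^-)f=V(s,u)f \ \text{ if } u \notin \{T_{n}(s): n \in \mathbb{N}\},\qquad V(s, T_{n+1}(s))f= V(s, T_{n+1}(s)^-) D(x_{n}(s),x_{n+1}(s))f \ \ \forall n \in \mathbb{N}, \] where $V(s,t^-)f:=\lim_{u \uparrow t} V(s,u)f$.
   Context: $(Y,\|\cdot\|)$ is a real separable Banach space with Borel $\sigma$-algebra $\mathcal Y$, $(Y_1,\|\cdot\|_{Y_1})$ a real separable Banach space continuously embedded in $Y$; $J$ is $\mathbb{R}^+$ or $[0,T_\infty]$, $\Delta_J=\{(s,t)\in J^2:s\le t\}$, $J(s)=\{t\in J:t\ge s\}$; $D(J(s),Y)$ is the space of right-continuous functions with left limits. An inhomogeneous $Y$-semigroup is a map $\Gamma:\Delta_J\to\mathcal B(Y)$ with $\Gamma(t,t)=I$ and $\Gamma(s,r)\Gamma(r,t)=\Gamma(s,t)$ for $s\le r\le t$. Generator: $\mathcal D(A_\Gamma(t))$ is the set of $f\in Y$ such that $\lim_{h\downarrow0,\,t+h\in J}h^{-1}(\Gamma(t,t+h)-I)f$ and $\lim_{h\downarrow0,\,t-h\in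 J}h^{-1}(\Gamma(t-h,t)-I)f$ exist and are equal ($=A_\Gamma(t)f$), $\mathcal D(A_\Gamma)=\bigcap_t\mathcal D(A_\Gamma(t))$. $\Gamma$ is regular if $Y_1\subseteq\mathcal D(A_\Gamma)$; $\Gamma(s,t)Y_1\subseteq Y_1$ and $u\mapsto\Gamma(u,t)f$ is $\|\cdot\|_{Y_1}$-continuous for $f\in Y_1$; $u\mapsto\Gamma(s,u)f$ is $Y$-continuous on $J(s)$ for $f\in Y$; and $u\mapsto\Gamma(s,u)A_\Gamma(u)f$ is Bochner integrable on $[s,t]$ for $f\in Y_1$. Probabilistic setting: $(\Omega,\mathcal F,\mathbb P)$ complete; $X$ finite with all subsets as $\sigma$-algebra $\mathcal X$; $(x_n,T_n)_{n\ge0}$ a Markov renewal process ($x_n\in X$, $T_0=0$, $T_n=\sum_{k\le n}\tau_k$, $\tau_k>0$) with semi-Markov kernel $Q$; $N(t)=\sup\{n:T_n\le t\}$, $\Omega$ restricted to the full-measure event $\{N(t)<\infty\ \forall t\in\mathbb Q\}$; $x(t)=x_{N(t)}$; $N_s(t)=N(t)-N(s)$, $T_0(s)=s$, $T_n(s)=T_{N(s)+n}$ ($n\ge1$), $x_n(s)=x(T_n(s))$. $(\Gamma_x)_{x\in X}$ inhomogeneous $Y$-semigroups with generators $A_x$, with $(r,t,x,f)\mapsto\Gamma_x(r\wedge t,r\vee t)f$ jointly measurable; $(D(x,y))_{x,y}\subseteq\mathcal B(Y)$ contractions with $(x,y,f)\mapsto D(x,y)f$ measurable. The inhomogeneous $Y$-random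 evolution is $V(s,t)=\big[\prod_{k=1}^{N_s(t)}\Gamma_{x_{k-1}(s)}(T_{k-1}(s),T_k(s))D(x_{k-1}(s),x_k(s))\big]\Gamma_{x(t)}(T_{N_s(t)}(s),t)$ (product ordered left to right, empty product $I$), defined pathwise on $\Delta_J\times\Omega$. $V$ is regular if every $\Gamma_x$ is regular. *)

From HB Require Import structures.
From mathcomp Require Import all_boot all_order all_algebra.
From mathcomp Require Import all_classical all_reals all_analysis.
From mathcomp Require Import measurable_realfun.
Set Implicit Arguments. Unset Strict Implicit. Unset Printing Implicit Defensive.
Import Order.TTheory GRing.Theory Num.Theory.
Import numFieldNormedType.Exports.
Local Open Scope classical_set_scope.
Local Open Scope ring_scope.

Section Defs.
Variable R : realType.

Definition time_domain (J : set R) : Prop :=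
  J = [set t | 0 <= t] \/ exists Tinf : R, 0 < Tinf /\ J = [set t | 0 <= t <= Tinf].

Definition Jfrom (J : set R) (s : R) : set R := [set t | J t /\ s <= t].

Section Banach.
Variable Y : completeNormedModType R.

Definition separable_space (Z : completeNormedModType R) : Prop :=
  exists S : set Z, countable S /\ closure S = setT.

Definition bounded_linear_op (A : Y -> Y) : Prop :=
  (forall (a : R) (f g : Y), A (a *: f + g) = a *: A f + A g) /\
  exists M : R, forall f, `|A f| <= M * `|f|.

Definition contraction_op (A : Y -> Y) : Prop :=
  bounded_linear_op A /\ forall f, `|A f| <= `|f|.

Definition cont_embedding (Y1 : completeNormedModType R) (i : Y1 -> Y) : Prop :=
  (forall (a : R) (f g : Y1), i (a *: f + g) = a *: i f + i g) /\
  injective i /\ exists C : R, forall g, `|i g| <= C * `|g|.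

Definition is_Ysemigroup (J : set R) (G : R -> R -> Y -> Y) : Prop :=
  (forall s t, J s -> J t -> s <= t -> bounded_linear_op (G s t)) /\
  (forall t, J t -> G t t = id) /\
  (forall s r t, J s -> J r -> J t -> s <= r -> r <= t ->
      G s r \o G r t = G s t).

(** g = A_G(t) f : both one-sided difference quotients converge to g
    (each one whenever it is meaningful, i.e. t+h (resp. t-h) lies in J
    for all small h > 0). *)
Definition is_gen (J : set R) (G : R -> R -> Y -> Y) (t : R) (f g : Y) : Prop :=
  ((exists e : R, 0 < e /\ forall h, 0 < h < e -> J (t + h)) ->
     (fun h : R => h^-1 *: (G t (t + h) f - f)) @ 0^'+ --> g) /\
  ((exists e : R, 0 < e /\ forall h, 0 < h < e -> J (t - h)) ->
     (fun h : R => h^-1 *: (G (t - h) t f - f)) @ 0^'+ --> g).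

Definition in_gen_dom (J : set R) (G : R -> R -> Y -> Y) (t : R) (f : Y) : Prop :=
  exists g, is_gen J G t f g.

Definition simple_fn (phi : R -> Y) : Prop :=
  finite_set (range phi) /\
  forall y : Y, measurable (phi @^-1` [set y] : set (measurableTypeR R)).

(** Bochner integrability on A: strongly measurable (a.e. limit on A of simple
    functions) and with integrable norm (dominated by an integrable
    measurable function). *)
Definition bochner_integrable (A : set R) (g : R -> Y) : Prop :=
  (exists phi : nat -> R -> Y, (forall n, simple_fn (phi n)) /\
     exists N : set (measurableTypeR R), measurable N /\
       lebesgue_measure N = 0%E /\
       forall x, A x -> ~ N x -> phi n x @[n --> \oo] --> g x) /\
  (exists h : R -> \bar R, measurable_fun A h /\
     (forall x, A x -> ((`|g x|)%:E <= h x)%E) /\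
     (\int[lebesgue_measure]_(x in A) h x < +oo)%E).

Definition regular_semigroup (Y1 : completeNormedModType R) (i : Y1 -> Y)
    (J : set R) (G : R -> R -> Y -> Y) : Prop :=
  (forall t, J t -> forall g : Y1, in_gen_dom J G t (i g)) /\
  (forall s t, J s -> J t -> s <= t -> forall g : Y1, exists g' : Y1, G s t (i g) = i g') /\
  (forall t, J t -> forall g : Y1, exists h : R -> Y1,
      (forall u, J u -> u <= t -> i (h u) = G u t (i g)) /\
      {within [set u | J u /\ u <= t], continuous h}) /\
  (forall s, J s -> forall f : Y, {within Jfrom J s, continuous (fun u => G s u f)}) /\
  (forall s t, J s -> J t -> s <= t -> forall g : Y1, exists a : R -> Y,
      (forall u, J u -> is_gen J G u (i g) (a u)) /\
      bochner_integrable `[s, t] (fun u => G s u (a u))).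

Definition left_lim (I : set R) (g : R -> Y) (t : R) (l : Y) : Prop :=
  forall e : R, 0 < e -> exists d : R, 0 < d /\
    forall u, I u -> t - d < u < t -> `|g u - l| < e.

Definition RCLL (I : set R) (g : R -> Y) : Prop :=
  forall t, I t ->
    (forall e : R, 0 < e -> exists d : R, 0 < d /\
       forall u, I u -> t <= u < t + d -> `|g u - g t| < e) /\
    ((exists u, I u /\ u < t) -> exists l, left_lim I g t l).

End Banach.

Section Path.
Variable X : finType.

Definition jump_times (tau : nat -> R) (n : nat) : R :=
  \sum_(1 <= k < n.+1) tau k.

(** N(t) = sup {n : T_n <= t} (a maximum when it is finite) *)
Definition Ncount (T : nat -> R) (t : R) : nat :=
  xget 0%N [set n | T n <= t /\ forall m, T m <= t -> (m <= n)%N].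

Definition Nst (T : nat -> R) (s t : R) : nat := (Ncount T t - Ncount T s)%N.

Definition Ts (T : nat -> R) (s : R) (n : nat) : R :=
  if n is 0 then s else T (Ncount T s + n)%N.

Definition xt (T : nat -> R) (x : nat -> X) (t : R) : X := x (Ncount T t).

Definition xs_ (T : nat -> R) (x : nat -> X) (s : R) (n : nat) : X :=
  xt T x (Ts T s n).

Variable Y : completeNormedModType R.

(** ordered product F 1 F 2 ... F m (leftmost applied last) *)
Fixpoint opprod (F : nat -> Y -> Y) (m : nat) : Y -> Y :=
  match m with 0 => id | m'.+1 => opprod F m' \o F m'.+1 end.

Definition rand_evol (G : X -> R -> R -> Y -> Y) (D : X -> X -> Y -> Y)
    (T : nat -> R) (x : nat -> X) (s t : R) : Y -> Y :=
  opprod (fun k => G (xs_ T x s k.-1) (Ts T s k.-1) (Ts T s k)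
                    \o D (xs_ T x s k.-1) (xs_ T x s k)) (Nst T s t)
  \o G (xt T x t) (Ts T s (Nst T s t)) t.

End Path.
End Defs.

From HB Require Import structures.
From mathcomp Require Import all_boot all_order all_algebra.
From mathcomp Require Import all_classical all_reals all_analysis.
From mathcomp Require Import measurable_realfun.
From mathcomp Require Import lra zify.
Import Order.TTheory GRing.Theory Num.Theory.
Import numFieldNormedType.Exports.
Local Open Scope classical_set_scope.
Local Open Scope ring_scope.

(* Between two consecutive jumps T_n(s) <= u < T_(n+1)(s) the evolution is
   V(s,u) = A_n Gamma_(x_n(s))(T_n(s),u), where the ordered product A_n of the
   first n jump factors does not depend on u.  Hence V(s,.)f inherits from
   u |-> Gamma(T_n(s),u)f its continuity on [T_n(s),T_(n+1)(s)), and its left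
   limit at T_(n+1)(s) is A_n Gamma(T_n(s),T_(n+1)(s))f, which differs from
   V(s,T_(n+1)(s))f exactly by the jump operator D(x_n(s),x_(n+1)(s)).  The
   semigroup law splits the product defining V(s,t) at the jumps before r; the
   two Gamma factors meeting at r merge by the semigroup law of Gamma. *)

Set Implicit Arguments. Unset Strict Implicit.

Lemma within_continuous_dist (R : realType) (Y : completeNormedModType R)
    (A : set R) (f : R -> Y) t :
  {within A, continuous f} -> A t -> forall e : R, 0 < e ->
  exists d : R, 0 < d /\ forall u, A u -> `|u - t| < d -> `|f u - f t| < e.
Proof.
move=> /subspace_continuousP /(_ t) fcont At e e0.
move: (fcont At) => /cvgr_distC_lt /(_ e e0).
rewrite /prop_near1 /= /within /= => /nbhs_ballP [d d0 Hd].
by exists d; split => // u Au ut; apply: Hd => //; rewrite /ball /= distrC.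
Qed.

Section BoundedLinear.
Variables (R : realType) (Y : completeNormedModType R).

Lemma bounded_linear_op_pos (A : Y -> Y) : bounded_linear_op A ->
  exists M : R, 0 < M /\ forall f, `|A f| <= M * `|f|.
Proof.
move=> [_ [M hM]]; exists (`|M| + 1); split; first by rewrite ltr_pwDr.
move=> f; apply: le_trans (hM f) _; apply: ler_wpM2r => //.
by apply: le_trans (ler_norm M) _; rewrite lerDl.
Qed.

Lemma bounded_linear_opB (A : Y -> Y) : bounded_linear_op A ->
  forall f g, A f - A g = A (f - g).
Proof.
move=> [Alin _] f g; have := Alin (-1) g f.
by rewrite !scaleN1r [X in _ = X]addrC => <-; rewrite addrC.
Qed.

Lemma bounded_linear_op_id : bounded_linear_op (@id Y).
Proof. by split => //; exists 1 => f; rewrite mul1r. Qed.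

Lemma bounded_linear_op_comp (A B : Y -> Y) :
  bounded_linear_op A -> bounded_linear_op B -> bounded_linear_op (A \o B).
Proof.
move=> hA hB; have [MA [MA0 hMA]] := bounded_linear_op_pos hA.
have [MB [MB0 hMB]] := bounded_linear_op_pos hB.
split; first by move=> a f g /=; rewrite hB.1 hA.1.
exists (MA * MB) => f /=; apply: le_trans (hMA _) _.
by rewrite -mulrA ler_wpM2l // ltW.
Qed.

Lemma opprodD (F : nat -> Y -> Y) m n :
  opprod F (m + n) = opprod F m \o opprod (fun k => F (m + k)%N) n.
Proof.
elim: n => [|n IH]; first by rewrite addn0; apply: funext.
by rewrite addnS /= IH; apply: funext => y /=; rewrite addnS.
Qed.

Lemma opprod_recl (F : nat -> Y -> Y) n :
  opprod F n.+1 = F 1%N \o opprod (fun k => F k.+1) n.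
Proof. by rewrite -add1n opprodD. Qed.

Lemma eq_opprod (F F' : nat -> Y -> Y) n :
  (forall k, (0 < k <= n)%N -> F k = F' k) -> opprod F n = opprod F' n.
Proof.
elim: n => [//|n IH] eqF /=; rewrite IH ?eqF ?leqnn //.
by move=> k /andP [k0 kn]; apply: eqF; rewrite k0 (leq_trans kn).
Qed.

Lemma bounded_linear_op_opprod (F : nat -> Y -> Y) n :
  (forall k, (0 < k <= n)%N -> bounded_linear_op (F k)) ->
  bounded_linear_op (opprod F n).
Proof.
elim: n => [|n IH] hF /=; first exact: bounded_linear_op_id.
apply: bounded_linear_op_comp; last by apply: hF; rewrite leqnn.
by apply: IH => k /andP [k0 kn]; apply: hF; rewrite k0 (leq_trans kn).
Qed.

End BoundedLinear.

Section JumpTimes.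
Variables (R : realType) (tau : nat -> R).

Lemma jump_times0 : jump_times tau 0 = 0.
Proof. by rewrite /jump_times big_geq. Qed.

Lemma jump_times_ltS : (forall k, 0 < tau k.+1) ->
  forall n, jump_times tau n < jump_times tau n.+1.
Proof.
by move=> tau_gt0 n; rewrite /jump_times [X in _ < X]big_nat_recr //= ltrDl.
Qed.

Lemma jump_times_unbounded :
  (forall q : rat, exists n : nat, ratr q < jump_times tau n) ->
  forall t : R, exists n, t < jump_times tau n.
Proof.
move=> hq t; have [n hn] := hq (Num.ceil t + 1)%:~R.
exists n; apply: le_lt_trans hn.
by rewrite ratr_int intrD; apply: le_trans (ceil_ge t) _; rewrite lerDl.
Qed.

End JumpTimes.

Section RandomEvolution.
Variables (R : realType) (T : nat -> R).
Hypothesis T0 : T 0 = 0.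
Hypothesis T_ltS : forall n, T n < T n.+1.
Hypothesis T_unbounded : forall t : R, exists n, t < T n.

Local Notation N := (Ncount T).
Local Notation P := (Ts T).

Lemma T_lt m n : (m < n)%N -> T m < T n.
Proof.
elim: n => // n IH; rewrite ltnS leq_eqVlt => /orP [/eqP -> //|/IH h].
exact: lt_trans h (T_ltS n).
Qed.

Lemma T_le m n : (m <= n)%N -> T m <= T n.
Proof. by rewrite leq_eqVlt => /orP [/eqP -> //|/T_lt/ltW]. Qed.

Lemma T_ltn m n : T m < T n -> (m < n)%N.
Proof. by move=> h; rewrite ltnNge; apply/negP => /T_le; rewrite leNgt h. Qed.

Lemma NcountE t n : T n <= t < T n.+1 -> N t = n.
Proof.
move=> /andP [h1 h2]; rewrite /Ncount; apply: xget_unique.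
  by split => // m hm; rewrite -ltnS; apply: T_ltn; exact: le_lt_trans hm h2.
move=> y [hy1 hy2]; apply/eqP; rewrite eqn_leq hy2 // andbT.
by rewrite -ltnS; apply: T_ltn; exact: le_lt_trans hy1 h2.
Qed.

Lemma Ncount_bracket t : 0 <= t -> T (N t) <= t < T (N t).+1.
Proof.
move=> t0; suff [n hn] : exists n, T n <= t < T n.+1 by rewrite (NcountE hn).
have [m] := T_unbounded t.
elim: m => [|m IH tm]; first by rewrite T0 => /(le_lt_trans t0); rewrite ltxx.
by case: (ltP t (T m)) => h; [exact: IH | exists m; rewrite h tm].
Qed.

Lemma Ncount_T j : N (T j) = j.
Proof. by apply: NcountE; rewrite lexx T_ltS. Qed.

Lemma le_Ncount s t : 0 <= s -> s <= t -> (N s <= N t)%N.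
Proof.
move=> s0 st; have /andP [h1 _] := Ncount_bracket s0.
have /andP [_ h2] := Ncount_bracket (le_trans s0 st).
by rewrite -ltnS; apply: T_ltn; apply: le_lt_trans h2; apply: le_trans st.
Qed.

Lemma TsE s k : (0 < k)%N -> P s k = T (N s + k).
Proof. by case: k. Qed.

Lemma Ts_ltS s k : 0 <= s -> P s k < P s k.+1.
Proof.
move=> s0; case: k => [|k] /=.
  by have /andP [_ h] := Ncount_bracket s0; rewrite addn1.
by rewrite [X in _ < T X]addnS; apply: T_ltS.
Qed.

Lemma Ts_le s k j : 0 <= s -> (k <= j)%N -> P s k <= P s j.
Proof.
move=> s0; elim: j => [|j IH]; first by rewrite leqn0 => /eqP ->.
rewrite leq_eqVlt => /orP [/eqP -> //|]; rewrite ltnS => /IH h.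
exact: le_trans h (ltW (Ts_ltS _ s0)).
Qed.

Lemma Ts_ge s k : 0 <= s -> s <= P s k.
Proof. by move=> s0; apply: (@Ts_le s 0 k s0). Qed.

Lemma Ncount_Nst s t : 0 <= s -> s <= t -> N t = (N s + Nst T s t)%N.
Proof. by move=> s0 st; rewrite /Nst subnKC // le_Ncount. Qed.

Lemma Ts_le_Nst s t k : 0 <= s -> s <= t -> (k <= Nst T s t)%N -> P s k <= t.
Proof.
move=> s0 st; case: k => [//|k] hk; rewrite TsE //.
have /andP [h _] := Ncount_bracket (le_trans s0 st); apply: le_trans h.
by apply: T_le; rewrite (Ncount_Nst s0 st) leq_add2l.
Qed.

Lemma Ncount_Ts s u n : 0 <= s -> s <= u -> P s n <= u < P s n.+1 ->
  N u = (N s + n)%N.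
Proof.
move=> s0 su /andP [h1 h2]; apply: NcountE.
rewrite -addnS -(TsE s (ltn0Sn n)) h2 andbT.
case: n h1 {h2} => [|n] h1; last by rewrite -(TsE s (ltn0Sn n)).
have /andP [h _] := Ncount_bracket s0.
by rewrite addn0; apply: le_trans h su.
Qed.

Lemma Ts_bracket s t : 0 <= s -> s < t -> exists n, P s n < t <= P s n.+1.
Proof.
move=> s0 st; have t0 := le_trans s0 (ltW st).
have ht := Ncount_Nst s0 (ltW st); set k := Nst T s t in ht.
have Pk : P s k <= t by apply: Ts_le_Nst => //; apply: ltW.
case: (ltP (P s k) t) => hk.
  exists k; rewrite hk /= addnS -ht.
  by have /andP [_ h] := Ncount_bracket t0; apply: ltW.
have ePk : P s k = t by apply/eqP; rewrite eq_le Pk hk.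
case: k ht Pk hk ePk => [|k] ht Pk hk ePk; first by move: st; rewrite -ePk ltxx.
by exists k; rewrite -ePk lexx andbT Ts_ltS.
Qed.

Variables (X : finType) (Y : completeNormedModType R) (J : set R).
Variables (G : X -> R -> R -> Y -> Y) (D : X -> X -> Y -> Y) (x : nat -> X).
Hypothesis J_domain : time_domain J.
Hypothesis G_semigroup : forall z, is_Ysemigroup J (G z).
Hypothesis D_contraction : forall z z', contraction_op (D z z').

Local Notation V := (rand_evol G D T x).

Definition jump_factor s k :=
  G (xs_ T x s k.-1) (P s k.-1) (P s k) \o D (xs_ T x s k.-1) (xs_ T x s k).

Lemma J_ge0 a : J a -> 0 <= a.
Proof. by case: J_domain => [->|[Ti [_ ->]]] //= /andP []. Qed.

Lemma J_between a b u : J a -> J b -> a <= u -> u <= b -> J u.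
Proof.
case: J_domain => [->|[Ti [_ ->]]] /= ha hb au ub; first exact: le_trans au.
move: ha hb => /andP [a0 _] /andP [_ bT].
by rewrite (le_trans a0 au) (le_trans ub bT).
Qed.

Lemma J_Ts s t k : J s -> J t -> s <= t -> (k <= Nst T s t)%N -> J (P s k).
Proof.
move=> Js Jt st hk; have s0 := J_ge0 Js.
exact: J_between Js Jt (@Ts_ge s k s0) (Ts_le_Nst s0 st hk).
Qed.

Lemma xsE s k : 0 <= s -> xs_ T x s k = x (N s + k).
Proof.
move=> s0; rewrite /xs_ /xt; case: k => [|k]; first by rewrite addn0.
by rewrite TsE // Ncount_T.
Qed.

Lemma rand_evolE s u n : N u = (N s + n)%N ->
  V s u = opprod (jump_factor s) n \o G (x (N s + n)) (P s n) u.
Proof. by move=> h; rewrite /rand_evol /Nst /xt h addKn. Qed.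

Lemma bounded_linear_op_jumps s n : J s -> J (P s n) ->
  bounded_linear_op (opprod (jump_factor s) n).
Proof.
move=> Js Jn; have s0 := J_ge0 Js.
apply: bounded_linear_op_opprod => k /andP [k0 kn].
apply: bounded_linear_op_comp; last exact: (D_contraction _ _).1.
have h1 : P s k <= P s n by apply: Ts_le.
have h2 : P s k.-1 <= P s k by apply: Ts_le => //; apply: leq_pred.
apply: (G_semigroup _).1 => //.
- exact: J_between Js Jn (@Ts_ge s k.-1 s0) (le_trans h2 h1).
- exact: J_between Js Jn (@Ts_ge s k s0) h1.
Qed.

Lemma rand_evol_bounded s t : J s -> J t -> s <= t -> bounded_linear_op (V s t).
Proof.
move=> Js Jt st; have s0 := J_ge0 Js.
rewrite (rand_evolE (Ncount_Nst s0 st)); have JP := J_Ts Js Jt st (leqnn _).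
apply: bounded_linear_op_comp; first exact: bounded_linear_op_jumps.
by apply: (G_semigroup _).1 => //; apply: Ts_le_Nst.
Qed.

Lemma rand_evol_id t : J t -> V t t = id.
Proof.
move=> Jt; rewrite (@rand_evolE t t 0) ?addn0 //.
by apply: funext => f /=; rewrite (G_semigroup _).2.1.
Qed.

Lemma Ts_shift s r n j : 0 <= s -> N r = (N s + n)%N -> (0 < j)%N ->
  P r j = P s (n + j).
Proof. by move=> s0 hr j0; rewrite !TsE ?addn_gt0 ?j0 ?orbT // hr addnA. Qed.

Lemma xs_shift s r n : 0 <= s -> 0 <= r -> N r = (N s + n)%N ->
  forall j, xs_ T x r j = xs_ T x s (n + j).
Proof. by move=> s0 r0 hr j; rewrite !xsE // hr addnA. Qed.

Lemma rand_evol_comp s r t : J s -> J r -> J t -> s <= r -> r <= t ->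
  V s r \o V r t = V s t.
Proof.
move=> Js Jr Jt sr rt; have s0 := J_ge0 Js; have r0 := J_ge0 Jr.
have hr := Ncount_Nst s0 sr; have ht := Ncount_Nst r0 rt.
set n := Nst T s r in hr *.
have JPn : J (P s n) by apply: J_Ts Jr sr _.
have Pn_r : P s n <= r by apply: Ts_le_Nst.
have G_merge z b : J b -> r <= b -> G z (P s n) r \o G z r b = G z (P s n) b.
  by move=> Jb rb; apply: (G_semigroup z).2.2.
case: (posnP (Nst T r t)) => [Nrt0|Nrt_gt0].
  rewrite Nrt0 addn0 in ht.
  have hts : N t = (N s + n)%N by rewrite ht.
  rewrite (rand_evolE hr) (@rand_evolE r t 0) ?addn0 // (rand_evolE hts) -hr.
  by apply: funext => f; rewrite -(G_merge _ t Jt rt).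
have [m Nrt] : exists m, Nst T r t = m.+1 by exists (Nst T r t).-1; rewrite prednK.
rewrite Nrt in ht.
have hts : N t = (N s + (n + m.+1))%N by rewrite ht hr addnA.
rewrite (rand_evolE hr) (rand_evolE ht) (rand_evolE hts).
rewrite opprodD (opprod_recl (jump_factor r)).
rewrite (opprod_recl (fun k => jump_factor s (n + k))).
have tail : opprod (fun k => jump_factor r k.+1) m =
            opprod (fun k => jump_factor s (n + k.+1)) m.
  apply: eq_opprod => k /andP [k0 _]; rewrite /jump_factor addnS /=.
  by rewrite !(xs_shift s0 r0 hr) (Ts_shift s0 hr k0) /= hr -addnA !addnS.
have first_jump : G (x (N s + n)) (P s n) r \o jump_factor r 1 =
                  jump_factor s n.+1.
  have rT : r < T (N s + n).+1 by rewrite -hr; have /andP [] := Ncount_bracket r0.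
  have JT : J (T (N s + n).+1).
    apply: (J_between Jr Jt (ltW rT)).
    have /andP [h _] := Ncount_bracket (le_trans r0 rt); apply: le_trans h.
    by apply: T_le; rewrite hts; lia.
  rewrite /jump_factor /= !(xs_shift s0 r0 hr) hr !addn0 !addn1 ?addnS.
  rewrite [xs_ _ _ _ n]xsE //.
  by rewrite -(G_merge _ _ JT (ltW rT)).
by rewrite tail (Ts_shift s0 hr (ltn0Sn m)) hr -addnA addn1 -first_jump.
Qed.

Lemma rand_evol_semigroup : is_Ysemigroup J V.
Proof.
split; first exact: rand_evol_bounded.
by split; [exact: rand_evol_id | exact: rand_evol_comp].
Qed.

Section Regular.
Hypothesis G_cont : forall z a, J a -> forall f,
  {within Jfrom J a, continuous (fun u => G z a u f)}.

Lemma rand_evol_left_lim s t n f : J s -> J t -> P s n < t -> t <= P s n.+1 ->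
  left_lim (Jfrom J s) (fun u => V s u f) t
    (opprod (jump_factor s) n (G (x (N s + n)) (P s n) t f)).
Proof.
move=> Js Jt h1 h2; have s0 := J_ge0 Js.
have JPn : J (P s n) by apply: J_between Js Jt (@Ts_ge s n s0) (ltW h1).
have A_bl := bounded_linear_op_jumps Js JPn.
have [M [M0 hM]] := bounded_linear_op_pos A_bl.
move=> e e0.
have tI : Jfrom J (P s n) t by split => //; apply: ltW.
have [d [d0 hd]] :=
  within_continuous_dist (@G_cont (x (N s + n)) _ JPn f) tI (divr_gt0 e0 M0).
exists (Num.min d (t - P s n)); split; first by rewrite lt_min d0 subr_gt0 h1.
move=> u [Ju su] /andP [hu1 hu2].
have hm1 : Num.min d (t - P s n) <= d by rewrite ge_min lexx.
have hm2 : Num.min d (t - P s n) <= t - P s n by rewrite ge_min lexx orbT.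
have hPu : P s n < u by lra.
have hNu : N u = (N s + n)%N.
  by apply: Ncount_Ts => //; rewrite (ltW hPu) (lt_le_trans hu2 h2).
rewrite (rand_evolE hNu) /= bounded_linear_opB //.
apply: le_lt_trans (hM _) _; rewrite -ltr_pdivlMl // mulrC.
apply: hd; first by split => //; apply: ltW.
by rewrite ltr0_norm ?subr_lt0 //; lra.
Qed.

Lemma rand_evol_right_cont s t f : J s -> J t -> s <= t ->
  forall e : R, 0 < e -> exists d : R, 0 < d /\
    forall u, Jfrom J s u -> t <= u < t + d -> `|V s u f - V s t f| < e.
Proof.
move=> Js Jt st e e0; have s0 := J_ge0 Js; have t0 := le_trans s0 st.
have ht := Ncount_Nst s0 st; set n := Nst T s t in ht.
have JPn : J (P s n) by apply: J_Ts Jt st _.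
have Pn_t : P s n <= t by apply: Ts_le_Nst.
have A_bl := bounded_linear_op_jumps Js JPn.
have [M [M0 hM]] := bounded_linear_op_pos A_bl.
have tI : Jfrom J (P s n) t by split.
have [d [d0 hd]] :=
  within_continuous_dist (@G_cont (x (N s + n)) _ JPn f) tI (divr_gt0 e0 M0).
have /andP [hN1 hN2] := Ncount_bracket t0.
exists (Num.min d (T (N t).+1 - t)); split; first by rewrite lt_min d0 subr_gt0 hN2.
move=> u [Ju su] /andP [hu1 hu2].
have hm1 : Num.min d (T (N t).+1 - t) <= d by rewrite ge_min lexx.
have hm2 : Num.min d (T (N t).+1 - t) <= T (N t).+1 - t by rewrite ge_min lexx orbT.
have hNu : N u = (N s + n)%N.
  by rewrite -ht; apply: NcountE; rewrite (le_trans hN1 hu1) /=; lra.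
rewrite (rand_evolE hNu) (rand_evolE ht) /= bounded_linear_opB //.
apply: le_lt_trans (hM _) _; rewrite -ltr_pdivlMl // mulrC.
apply: hd; first by split => //; apply: le_trans Pn_t hu1.
by rewrite ger0_norm ?subr_ge0 //; lra.
Qed.

Lemma rand_evol_RCLL s f : J s -> RCLL (Jfrom J s) (fun u => V s u f).
Proof.
move=> Js t [Jt st]; split; first exact: rand_evol_right_cont.
move=> [u [[Ju su] ut]].
have [n /andP [h1 h2]] := Ts_bracket (J_ge0 Js) (le_lt_trans su ut).
by eexists; apply: rand_evol_left_lim h1 h2.
Qed.

Lemma rand_evol_left_cont s u f : J s -> Jfrom J s u -> s < u ->
  (forall n, u <> P s n) ->
  left_lim (Jfrom J s) (fun u' => V s u' f) u (V s u f).
Proof.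
move=> Js [Ju _] su u_jump; have s0 := J_ge0 Js.
have [n /andP [h1 h2]] := Ts_bracket s0 su.
have h2' : u < P s n.+1 by rewrite lt_neqAle h2 andbT; apply/eqP; apply: u_jump.
have hNu : N u = (N s + n)%N by apply: Ncount_Ts; rewrite ?(ltW su) ?(ltW h1).
by rewrite (rand_evolE hNu); exact: rand_evol_left_lim h1 h2.
Qed.

Lemma rand_evol_left_lim_jump s n f : J s -> J (P s n.+1) ->
  left_lim (Jfrom J s)
    (fun u => V s u (D (xs_ T x s n) (xs_ T x s n.+1) f))
    (P s n.+1) (V s (P s n.+1) f).
Proof.
move=> Js Jt; have s0 := J_ge0 Js.
have hNt : N (P s n.+1) = (N s + n.+1)%N by rewrite TsE // Ncount_T.
rewrite (rand_evolE hNt) /= (G_semigroup _).2.1 // /jump_factor /= xsE //.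
exact: rand_evol_left_lim Js Jt (Ts_ltS _ s0) (lexx _).
Qed.

End Regular.

End RandomEvolution.

Unset Implicit Arguments.

Theorem proposition3p3 (R : realType) (Y Y1 : completeNormedModType R)
  (i : Y1 -> Y) (X : finType) (Omega : Type) (J : set R)
  (Gam : X -> R -> R -> Y -> Y) (D : X -> X -> Y -> Y)
  (tau : nat -> Omega -> R) (x : nat -> Omega -> X) :
  separable_space Y -> separable_space Y1 -> cont_embedding i ->
  time_domain J ->
  (forall z : X, is_Ysemigroup J (Gam z)) ->
  (forall z z' : X, contraction_op (D z z')) ->
  (forall (k : nat) (w : Omega), 0 < tau k.+1 w) ->
  (forall (w : Omega) (q : rat),
      exists n : nat, ratr q < jump_times (fun k => tau k w) n) ->
  forall (s : R) (w : Omega), J s ->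
  let T := jump_times (fun k => tau k w) in
  let V := rand_evol Gam D T (fun n => x n w) in
  is_Ysemigroup J V /\
  ((forall z : X, regular_semigroup i J (Gam z)) ->
   forall f : Y,
     RCLL (Jfrom J s) (fun u => V s u f) /\
     (forall u, Jfrom J s u -> s < u -> (forall n : nat, u <> Ts T s n) ->
        left_lim (Jfrom J s) (fun u' => V s u' f) u (V s u f)) /\
     (forall n : nat, J (Ts T s n.+1) ->
        left_lim (Jfrom J s)
          (fun u' => V s u' (D (xs_ T (fun m => x m w) s n)
                               (xs_ T (fun m => x m w) s n.+1) f))
          (Ts T s n.+1) (V s (Ts T s n.+1) f))).
Proof.
move=> _ _ _ hJ hG hD tau_gt0 tau_unbounded s w Js; cbv zeta.
have T0 := jump_times0 (fun k => tau k w).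
have T_ltS := @jump_times_ltS _ (fun k => tau k w) (fun k => tau_gt0 k w).
have T_unbounded := jump_times_unbounded (tau_unbounded w).
split; first exact: rand_evol_semigroup.
move=> hreg f.
(* regularity is used only through the strong continuity of u |-> Gamma(a,u)f *)
have G_cont z a : J a -> forall g, {within Jfrom J a, continuous (fun u => Gam z a u g)}.
  by move=> Ja g; apply: (hreg z).2.2.2.1.
split; first exact: rand_evol_RCLL.
split=> [u|n]; [exact: rand_evol_left_cont | exact: rand_evol_left_lim_jump].
Qed.
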